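(* Let $\tilde{\mathcal{A}}=\tilde{\mathcal{A}}(R,\boldsymbol{\sigma},\boldsymbol{t})$ be a twisted generalized Weyl construction with $t_1,\dots,t_n$ regular in $R$ and satisfying the consistency equations. Then the following subsets of $\tilde{\mathcal{A}}$ coincide: (i) the sum $\mathcal{I}$ of all graded ideals $I$ of $\tilde{\mathcal{A}}$ with $I\cap R=\{0\}$; (ii) the set of $R$-torsion elements $T_R(\tilde{\mathcal{A}})=\{a\in\tilde{\mathcal{A}}\mid\exists r\in R_{\mathrm{reg}}: ra=0\}$. Moreover $T_R(\tilde{\mathcal{A}})=\{a\in\tilde{\mathcal{A}}\mid\exists r\in R_{\mathrm{reg}}: ar=0\}$.
   Context: Let $\Bbbk$ be a field, $R$ a unital associative $\Bbbk$-algebra, $n\ge1$, $\sigma_1^{1/2},\dots,\sigma_n^{1/2}$ pairwise commuting $\Bbbk$-algebra automorphisms of $R$ (with $\sigma_i=(\sigma_i^{1/2})^2$), and $t_1,\dots,t_n$ central elements of $R$. The TGWC $\tilde{\mathcal{A}}(R,\boldsymbol{\sigma},\boldsymbol{t})$ is the algebra obtained from $R$ by adjoining generators $X_1^\pm,\dots,X_n^\pm$ subject to $X_i^\pm r=\sigma_i^{\pm1}(r)X_i^\pm$ ($r\in R$), $X_i^\pm X_i^\mp=\sigma_i^{\pm1/2}(t_i)$, and $[X_i^\pm,X_j^\mp]=0$ for $i\ne j$. It is $\mathbb{Z}^n$-graded with $\deg r=0$, $\deg X_i^\pm=\pm\mathbf{e}_i$. The consistency equations are: $\sigma_j^{1/2}(t_i)\sigma_i^{1/2}(t_j)=\sigma_j^{-1/2}(t_i)\sigma_i^{-1/2}(t_j)$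 for $i\ne j$, and $\sigma_i^{1/2}\sigma_j^{1/2}(t_k)\,\sigma_i^{-1/2}\sigma_j^{-1/2}(t_k)=\sigma_i^{1/2}\sigma_j^{-1/2}(t_k)\,\sigma_i^{-1/2}\sigma_j^{1/2}(t_k)$ for pairwise distinct $i,j,k$. Under these assumptions $R$ embeds into $\tilde{\mathcal{A}}$ as its degree-zero component, and we identify $R$ with it. $R_{\mathrm{reg}}$ denotes the set of non-zero-divisors of $R$. *)

From HB Require Import structures.
From mathcomp Require Import all_boot all_order all_algebra.
Set Implicit Arguments. Unset Strict Implicit. Unset Printing Implicit Defensive.
Import Order.TTheory GRing.Theory Num.Theory.
Local Open Scope ring_scope.

Definition unitvec (n : nat) (i : 'I_n) : 'rV[int]_n := delta_mx 0 i.

Definition regular (R : pzRingType) (r : R) : Prop := GRing.lreg r /\ GRing.rreg r.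

(* Defining relations of the TGWC for the data (phi : R -> B, Xp, Xm) in a ring B,
   where s i = sigma_i^{1/2}, si i = sigma_i^{-1/2}, so sigma_i^{+-1} = (s i)^2, (si i)^2. *)
Definition tgwc_relations (R : pzRingType) (n : nat)
    (s si : 'I_n -> R -> R) (t : 'I_n -> R)
    (B : pzRingType) (phi : R -> B) (Xp Xm : 'I_n -> B) : Prop :=
  (forall i r, Xp i * phi r = phi (s i (s i r)) * Xp i) /\
  (forall i r, Xm i * phi r = phi (si i (si i r)) * Xm i) /\
  (forall i, Xp i * Xm i = phi (s i (t i))) /\
  (forall i, Xm i * Xp i = phi (si i (t i))) /\
  (forall i j, i != j -> Xp i * Xm j = Xm j * Xp i) /\
  (forall i j, i != j -> Xm i * Xp j = Xp j * Xm i).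

Definition tgwc_universal (R : pzRingType) (n : nat)
    (s si : 'I_n -> R -> R) (t : 'I_n -> R)
    (A : pzRingType) (iota : {rmorphism R -> A}) (Xp Xm : 'I_n -> A) : Prop :=
  tgwc_relations s si t iota Xp Xm /\
  forall (B : pzRingType) (phi : {rmorphism R -> B}) (Yp Ym : 'I_n -> B),
    tgwc_relations s si t phi Yp Ym ->
    exists psi : {rmorphism A -> B},
      [/\ (forall r, psi (iota r) = phi r), (forall i, psi (Xp i) = Yp i),
          (forall i, psi (Xm i) = Ym i) &
          forall psi' : {rmorphism A -> B},
            (forall r, psi' (iota r) = phi r) -> (forall i, psi' (Xp i) = Yp i) ->
            (forall i, psi' (Xm i) = Ym i) -> forall a, psi' a = psi a].

Definition is_grading (A : pzRingType) (n : nat) (D : 'rV[int]_n -> A -> Prop) : Prop :=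
  [/\ (forall g, D g 0 /\ forall x y, D g x -> D g y -> D g (x - y)),
      (forall g h x y, D g x -> D h y -> D (g + h) (x * y)),
      (forall a, exists (gs : seq 'rV[int]_n) (f : 'rV[int]_n -> A),
          [/\ uniq gs, (forall g, D g (f g)) & a = \sum_(g <- gs) f g]) &
      (forall (gs : seq 'rV[int]_n) (f : 'rV[int]_n -> A),
          uniq gs -> (forall g, D g (f g)) -> \sum_(g <- gs) f g = 0 ->
          forall g, g \in gs -> f g = 0)].

Definition is_ideal (A : pzRingType) (I : A -> Prop) : Prop :=
  [/\ I 0, (forall x y, I x -> I y -> I (x - y)) &
      forall a x, I x -> I (a * x) /\ I (x * a)].

Definition is_graded_ideal (A : pzRingType) (n : nat) (D : 'rV[int]_n -> A -> Prop)
    (I : A -> Prop) : Prop :=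
  is_ideal I /\
  forall a, I a -> exists (gs : seq 'rV[int]_n) (f : 'rV[int]_n -> A),
     [/\ uniq gs, (forall g, D g (f g) /\ I (f g)) & a = \sum_(g <- gs) f g].

Definition in_sum_of_graded_ideals_meeting_R_trivially
    (R A : pzRingType) (n : nat) (D : 'rV[int]_n -> A -> Prop)
    (iota : R -> A) (a : A) : Prop :=
  exists (m : nat) (Is : 'I_m -> A -> Prop) (xs : 'I_m -> A),
    [/\ (forall j, is_graded_ideal D (Is j)),
        (forall j r, Is j (iota r) -> iota r = 0),
        (forall j, Is j (xs j)) &
        a = \sum_(j < m) xs j].

(* First, R embeds into A.  Let A act on functions Z^n -> L, where L
   is R localized at its central regular elements, by weighted shifts: r acts at g
   by sigma^g(r), X_i^+ shifts by e_i with weight tau_i(trunc_i g) and X_i^- shifts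
   by -e_i with weight tau_i(g - e_i) / tau_i(trunc_i (g - e_i)), where
   tau_i(h) = sigma^h(sigma_i^{1/2}(t_i)) and trunc_i forgets the coordinates after i.
   The consistency equations say that tau_l(h + e_d) / tau_l(h) does not depend on
   the coordinates h_k with k <> l, d; this makes X_i^+ and X_j^- commute.
   Second, every element of A is a sum of products r X_w over words w, the degree
   zero part of A is R, and X_{w^-1} X_w lies in R and is central regular.  So a
   homogeneous b of degree g is R-torsion exactly when X_w b = 0 for the words w of
   degree -g, a condition which is left-right symmetric.  The torsion elements
   then form a graded ideal meeting R trivially, which contains every such ideal. *)

From HB Require Import structures.
From mathcomp Require Import all_boot all_order all_algebra.
From mathcomp Require Import boolp functions zify.
Import GRing.Theory.
Local Open Scope ring_scope.
Local Open Scope quotient_scope.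

Ltac vec_eq := apply/rowP => ?; rewrite !mxE; lia.

Section CentralRegular.
Context {R : pzRingType}.
Implicit Types c d x : R.

Definition creg c := (forall x, c * x = x * c) /\ GRing.lreg c.

Lemma cregC {c} x : creg c -> c * x = x * c.
Proof. by case=> + _; apply. Qed.

Lemma mulrAC_creg {c} (x y : R) : creg c -> x * c * y = x * y * c.
Proof. by move=> hc; rewrite -mulrA (cregC _ hc) mulrA. Qed.

Lemma creg1 : creg 1.
Proof. by split=> [x|]; rewrite ?mul1r ?mulr1 //; apply: lreg1. Qed.

Lemma cregM {c d} : creg c -> creg d -> creg (c * d).
Proof.
move=> hc hd; split=> [x|]; last by apply: lregM; [case: hc | case: hd].
by rewrite -mulrA (cregC _ hd) mulrA (cregC _ hc) mulrA.
Qed.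

Lemma creg_regular {c} : creg c -> regular c.
Proof.
move=> hc; split; first by case: hc.
by move=> x y /= e; apply: hc.2; rewrite /= !(cregC _ hc).
Qed.

Lemma creg_rmorph {f : {rmorphism R -> R}} {g : R -> R} {c} :
  cancel f g -> cancel g f -> creg c -> creg (f c).
Proof.
move=> fK gK hc; split=> [x|x y e].
  by rewrite -(gK x) -!rmorphM (cregC _ hc).
apply: (can_inj gK); apply: hc.2; apply: (can_inj fK).
by rewrite !rmorphM !gK.
Qed.

End CentralRegular.

(** * Additive endomorphisms and localization *)

Section AdditiveEndomorphisms.
Variable M : zmodType.

Record addEnd := AddEnd { addEnd_fun :> M -> M; addEnd_zmod : zmod_morphism addEnd_fun }.

HB.instance Definition _ (f : addEnd) :=
  GRing.isZmodMorphism.Build M M (addEnd_fun f) (addEnd_zmod f).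
HB.instance Definition _ := gen_eqMixin addEnd.
HB.instance Definition _ := gen_choiceMixin addEnd.

Lemma addEnd_ext (f g : addEnd) : f =1 g -> f = g.
Proof.
case: f g => f fP [g gP] /= /funext eq_fg; subst g.
by congr AddEnd; apply: Prop_irrelevance.
Qed.

Let zmod_opp (f : addEnd) : zmod_morphism (fun x => - f x).
Proof. by move=> x y; rewrite raddfB opprD. Qed.
Let zmod_add (f g : addEnd) : zmod_morphism (fun x => f x + g x).
Proof. by move=> x y; rewrite !raddfB addrACA opprD. Qed.
Let zmod_comp (f g : addEnd) : zmod_morphism (f \o g).
Proof. by move=> x y; rewrite /= !raddfB. Qed.

Definition addEnd0 := @AddEnd (fun=> 0) (fun _ _ => esym (subr0 0)).
Definition addEnd1 := @AddEnd id (fun _ _ => erefl).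
Definition addEnd_opp f := @AddEnd _ (zmod_opp f).
Definition addEnd_add f g := @AddEnd _ (zmod_add f g).
Definition addEnd_mul f g := @AddEnd _ (zmod_comp f g).

Let addEnd_addA : associative addEnd_add.
Proof. by move=> f g h; apply: addEnd_ext => x /=; rewrite addrA. Qed.
Let addEnd_addC : commutative addEnd_add.
Proof. by move=> f g; apply: addEnd_ext => x /=; rewrite addrC. Qed.
Let addEnd_add0 : left_id addEnd0 addEnd_add.
Proof. by move=> f; apply: addEnd_ext => x /=; rewrite add0r. Qed.
Let addEnd_addN : left_inverse addEnd0 addEnd_opp addEnd_add.
Proof. by move=> f; apply: addEnd_ext => x /=; rewrite addNr. Qed.
Let addEnd_mulA : associative addEnd_mul.
Proof. by move=> f g h; apply: addEnd_ext. Qed.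
Let addEnd_mul1 : left_id addEnd1 addEnd_mul.
Proof. by move=> f; apply: addEnd_ext. Qed.
Let addEnd_mulr1 : right_id addEnd1 addEnd_mul.
Proof. by move=> f; apply: addEnd_ext. Qed.
Let addEnd_mulDl : left_distributive addEnd_mul addEnd_add.
Proof. by move=> f g h; apply: addEnd_ext. Qed.
Let addEnd_mulDr : right_distributive addEnd_mul addEnd_add.
Proof. by move=> f g h; apply: addEnd_ext => x /=; rewrite raddfD. Qed.

HB.instance Definition _ := GRing.isPzRing.Build addEnd addEnd_addA addEnd_addC
  addEnd_add0 addEnd_addN addEnd_mulA addEnd_mul1 addEnd_mulr1 addEnd_mulDl addEnd_mulDr.

End AdditiveEndomorphisms.

Arguments AddEnd {M addEnd_fun}.

Section CentralLocalization.
Variable R : pzRingType.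

Record cden := CDen { cden_val :> R; cden_creg : creg cden_val }.
HB.instance Definition _ := gen_eqMixin cden.
HB.instance Definition _ := gen_choiceMixin cden.

Lemma cden_inj : injective cden_val.
Proof. by case=> d hd [e he] /= ede; subst e; congr CDen; apply: Prop_irrelevance. Qed.

Definition cden1 := @CDen _ (@creg1 R).
Definition cdenM (d e : cden) := @CDen _ (cregM (cden_creg d) (cden_creg e)).

Definition frac_equiv (x y : R * cden) := x.1 * (y.2 : R) == y.1 * (x.2 : R).

Let frac_equiv_refl : reflexive frac_equiv. Proof. by move=> x; rewrite /frac_equiv. Qed.
Let frac_equiv_sym : symmetric frac_equiv.
Proof. by move=> x y; rewrite /frac_equiv eq_sym. Qed.
Let frac_equiv_trans : transitive frac_equiv.
Proof.
move=> [b e] [a d] [c f]; rewrite /frac_equiv /= => /eqP ha /eqP hc; apply/eqP.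
apply: (creg_regular (cden_creg e)).2 => /=.
rewrite -(mulrAC_creg a f (cden_creg e)) ha (mulrAC_creg b f (cden_creg d)) hc.
exact: mulrAC_creg _ _ (cden_creg e).
Qed.

Canonical frac_equiv_rel := EquivRel frac_equiv frac_equiv_refl frac_equiv_sym frac_equiv_trans.
Definition cfrac := {eq_quot frac_equiv}.
HB.instance Definition _ : EqQuotient _ frac_equiv cfrac := EqQuotient.on cfrac.
HB.instance Definition _ := Choice.on cfrac.

Definition frac a d : cfrac := \pi_cfrac (a, d).

Lemma frac_eq a d b e : frac a d = frac b e <-> a * (e : R) = b * (d : R).
Proof. by split=> [/eqquotP/eqP | /eqP h]; last apply/eqquotP. Qed.

Lemma frac_congr a b (d e : cden) : a = b -> d = e :> R -> frac a d = frac b e.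
Proof. by move=> -> /cden_inj ->. Qed.

Lemma frac_ind (P : cfrac -> Prop) : (forall a d, P (frac a d)) -> forall x, P x.
Proof. by move=> hP x; rewrite -[x]reprK [repr x]surjective_pairing; apply: hP. Qed.

Lemma frac_repr a d : (repr (frac a d)).1 * (d : R) = a * ((repr (frac a d)).2 : R).
Proof. by apply/frac_eq; rewrite /frac -surjective_pairing reprK. Qed.

Lemma frac_scale a d {c} (hc : creg c) : frac (a * c) (cdenM d (@CDen _ hc)) = frac a d.
Proof. by apply/frac_eq; rewrite /= -!mulrA (cregC _ hc). Qed.

Definition frac_add (x y : cfrac) : cfrac :=
  frac ((repr x).1 * ((repr y).2 : R) + (repr y).1 * ((repr x).2 : R))
       (cdenM (repr x).2 (repr y).2).

Lemma frac_addE a d b e :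
  frac_add (frac a d) (frac b e) = frac (a * (e : R) + b * (d : R)) (cdenM d e).
Proof.
rewrite /frac_add; move: (frac_repr a d) (frac_repr b e).
case: (repr (frac a d)) (repr (frac b e)) => a' d' [b' e'] /= ha hb.
apply/frac_eq => /=; rewrite !mulrDl !mulrA; congr (_ + _).
  rewrite (mulrAC_creg a' d (cden_creg e')) ha (mulrAC_creg a d' (cden_creg e)).
  exact: mulrAC_creg _ _ (cden_creg e').
rewrite (mulrAC_creg b' d (cden_creg d')) (mulrAC_creg (b' * (d : R)) e (cden_creg d')).
rewrite (mulrAC_creg b' e (cden_creg d)) hb (mulrAC_creg b d (cden_creg e')).
exact: mulrAC_creg _ _ (cden_creg e').
Qed.

Definition fscale (a : R) (d : cden) (x : cfrac) : cfrac :=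
  frac (a * (repr x).1) (cdenM d (repr x).2).

Lemma fscaleE a d b e : fscale a d (frac b e) = frac (a * b) (cdenM d e).
Proof.
rewrite /fscale; move: (frac_repr b e).
case: (repr (frac b e)) => b' e' /= hb; apply/frac_eq => /=.
rewrite -!mulrA; congr (a * _); rewrite mulrA (mulrAC_creg b' e (cden_creg d)) hb.
by rewrite (mulrAC_creg b d (cden_creg e')) mulrA.
Qed.

Definition frac_opp : cfrac -> cfrac := fscale (-1) cden1.

Let frac_addA : associative frac_add.
Proof.
elim/frac_ind => a d; elim/frac_ind => b e; elim/frac_ind => c f.
rewrite !frac_addE; apply: frac_congr; last by rewrite /= mulrA.
rewrite !mulrDl !mulrA addrA (mulrAC_creg b d (cden_creg f)).
by rewrite (mulrAC_creg c d (cden_creg e)).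
Qed.
Let frac_addC : commutative frac_add.
Proof.
elim/frac_ind => a d; elim/frac_ind => b e; rewrite !frac_addE.
by apply: frac_congr; [rewrite addrC | apply: cregC (cden_creg d)].
Qed.
Let frac_add0 : left_id (frac 0 cden1) frac_add.
Proof.
elim/frac_ind => a d; rewrite frac_addE.
by apply: frac_congr; rewrite /= ?mul0r ?add0r ?mulr1 ?mul1r.
Qed.
Let frac_addN : left_inverse (frac 0 cden1) frac_opp frac_add.
Proof.
elim/frac_ind => a d; rewrite /frac_opp fscaleE frac_addE.
by apply/frac_eq; rewrite /= mulN1r !mul1r mulNr addNr !mul0r.
Qed.

HB.instance Definition _ := GRing.isZmodule.Build cfrac frac_addA frac_addC frac_add0 frac_addN.

Lemma fracD a d b e : frac a d + frac b e = frac (a * (e : R) + b * (d : R)) (cdenM d e).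
Proof. exact: frac_addE. Qed.

Lemma fracN x : - x = fscale (-1) cden1 x.
Proof. by []. Qed.

Lemma frac1_eq0 (r : R) : frac r cden1 = 0 -> r = 0.
Proof. by move/frac_eq; rewrite /= !mulr1. Qed.

Lemma fscaleA a d b e x : fscale a d (fscale b e x) = fscale (a * b) (cdenM d e) x.
Proof.
elim/frac_ind: x => c f; rewrite !fscaleE.
by apply: frac_congr; rewrite /= mulrA.
Qed.

Lemma fscale1 x : fscale 1 cden1 x = x.
Proof. by elim/frac_ind: x => a d; rewrite fscaleE; apply: frac_congr; rewrite /= mul1r. Qed.

Lemma fscale_congr a b (d e : cden) x : a * (e : R) = b * (d : R) -> fscale a d x = fscale b e x.
Proof.
move=> h; elim/frac_ind: x => c f; rewrite !fscaleE; apply/frac_eq => /=.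
by rewrite !mulrA -(mulrAC_creg a c (cden_creg e)) h (mulrAC_creg b c (cden_creg d)).
Qed.

Lemma fscaleD a d x y : fscale a d (x + y) = fscale a d x + fscale a d y.
Proof.
elim/frac_ind: x => b e; elim/frac_ind: y => c f; rewrite fracD !fscaleE fracD.
rewrite -(frac_scale _ _ (cden_creg d)); apply: frac_congr => /=.
  rewrite mulrDr mulrDl !mulrA (mulrAC_creg (a * b) d (cden_creg f)).
  by rewrite (mulrAC_creg (a * c) d (cden_creg e)).
by rewrite !mulrA (mulrAC_creg _ d (cden_creg f)).
Qed.

Lemma fscaleN a d x : fscale a d (- x) = - fscale a d x.
Proof.
by rewrite !fracN !fscaleA; apply: fscale_congr; rewrite /= mulrN1 mulN1r mul1r mulr1.
Qed.

Lemma fscale_zmod a d : zmod_morphism (fscale a d).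
Proof. by move=> x y; rewrite fscaleD fscaleN. Qed.

Lemma fscaleBl a b d x : fscale (a - b) d x = fscale a d x - fscale b d x.
Proof.
elim/frac_ind: x => c f; rewrite !fracN !fscaleA !fscaleE fracD.
rewrite -(frac_scale _ _ (cden_creg (cdenM d f))); apply: frac_congr => /=.
  by rewrite !mul1r mulN1r !mulNr !mulrBl.
by rewrite !mul1r.
Qed.

End CentralLocalization.

Arguments CDen {R cden_val}.
Arguments cden1 {R}.
Arguments cdenM {R}.
Arguments frac {R}.
Arguments fscale {R}.

Lemma sum_partition (V : nmodType) (I K : eqType) (r : seq I) (key : I -> K) (F : I -> V) ks :
  uniq ks -> {in r, forall i, key i \in ks} ->
  \sum_(i <- r) F i = \sum_(k <- ks) \sum_(i <- r | key i == k) F i.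
Proof.
move=> uks kks; under [RHS]eq_bigr do rewrite big_mkcond.
rewrite exchange_big; apply: eq_big_seq => i ri.
rewrite (bigD1_seq (key i)) ?kks //= eqxx big1 ?addr0 // => k.
by rewrite eq_sym => /negbTE ->.
Qed.

Section Gradings.
Context {A : pzRingType} {n : nat} {D : 'rV[int]_n -> A -> Prop}.
Hypothesis hD : is_grading D.

Lemma grading0 g : D g 0.
Proof. by case: hD => /(_ g)[]. Qed.

Lemma gradingB {g x y} : D g x -> D g y -> D g (x - y).
Proof. by case: hD => /(_ g)[_ DB] _ _ _; apply: DB. Qed.

Lemma gradingD {g x y} : D g x -> D g y -> D g (x + y).
Proof.
move=> Dx Dy; rewrite -[y]opprK; apply: gradingB => //.
by rewrite -sub0r; apply: gradingB => //; apply: grading0.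
Qed.

Lemma grading_sum (I : Type) (r : seq I) (P : pred I) (F : I -> A) g :
  (forall i, P i -> D g (F i)) -> D g (\sum_(i <- r | P i) F i).
Proof. by move=> DF; apply: big_ind => //; [apply: grading0 | move=> ? ?; apply: gradingD]. Qed.

Lemma gradingM {g h x y} : D g x -> D h y -> D (g + h) (x * y).
Proof. by case: hD => _ + _ _; apply. Qed.

Lemma grading_decomp a : exists gs f,
  [/\ uniq gs, forall g, D g (f g) & a = \sum_(g <- gs) f g].
Proof. by case: hD => _ _ + _; apply. Qed.

Lemma grading_sum_eq0 gs f : uniq gs -> (forall g, D g (f g)) ->
  \sum_(g <- gs) f g = 0 -> forall g, g \in gs -> f g = 0.
Proof. by case: hD => _ _ _; apply. Qed.

Lemma grading_sum_deg0 (I : eqType) (r : seq I) (deg : I -> 'rV[int]_n) (F : I -> A) :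
  (forall i, D (deg i) (F i)) -> D 0 (\sum_(i <- r) F i) ->
  \sum_(i <- r) F i = \sum_(i <- r | deg i == 0) F i.
Proof.
move=> DF D0; set a := \sum_(i <- r) F i.
pose gs := undup (0 :: map deg r).
pose f g := \sum_(i <- r | deg i == g) F i - (if g == 0 then a else 0).
have gs0 : 0 \in gs by rewrite mem_undup mem_head.
have Df g : D g (f g).
  apply: gradingB; first by apply: grading_sum => i /eqP <-.
  by case: eqP => [->|_] //; apply: grading0.
have sum_if : \sum_(g <- gs) (if g == 0 then a else 0) = a.
  by rewrite (bigD1_seq 0) ?undup_uniq //= eqxx big1 ?addr0 // => g /negbTE ->.
have : \sum_(g <- gs) f g = 0.
  rewrite sumrB sum_if -sum_partition ?undup_uniq ?subrr // => i ri.
  by rewrite mem_undup in_cons map_f ?orbT.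
move/grading_sum_eq0 => /(_ (undup_uniq _) Df 0 gs0).
by rewrite /f eqxx => /eqP; rewrite subr_eq0 => /eqP.
Qed.

Lemma grading_mull0 {x a} : D 0 x -> x * a = 0 -> exists gs f,
  [/\ uniq gs, forall g, D g (f g), a = \sum_(g <- gs) f g & forall g, x * f g = 0].
Proof.
move=> Dx xa0; have [gs [f [ugs Df aE]]] := grading_decomp a.
have xf0 : {in gs, forall g, x * f g = 0}.
  apply: (@grading_sum_eq0 gs (fun g => x * f g)) => //; last by rewrite -mulr_sumr -aE.
  by move=> g; have := gradingM Dx (Df g); rewrite add0r.
exists gs, (fun g => if g \in gs then f g else 0); split=> //.
- by move=> g; case: ifP => _; [apply: Df | apply: grading0].
- by rewrite aE; apply: eq_big_seq => g ->.
by move=> g; case: ifP => [/xf0 //|_]; rewrite mulr0.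
Qed.

Lemma grading_mulr0 {x a} : D 0 x -> a * x = 0 -> exists gs f,
  [/\ uniq gs, forall g, D g (f g), a = \sum_(g <- gs) f g & forall g, f g * x = 0].
Proof.
move=> Dx ax0; have [gs [f [ugs Df aE]]] := grading_decomp a.
have fx0 : {in gs, forall g, f g * x = 0}.
  apply: (@grading_sum_eq0 gs (fun g => f g * x)) => //; last by rewrite -mulr_suml -aE.
  by move=> g; have := gradingM (Df g) Dx; rewrite addr0.
exists gs, (fun g => if g \in gs then f g else 0); split=> //.
- by move=> g; case: ifP => _; [apply: Df | apply: grading0].
- by rewrite aE; apply: eq_big_seq => g ->.
by move=> g; case: ifP => [/fx0 //|_]; rewrite mul0r.
Qed.

End Gradings.


(** * A representation of the TGWC on which R acts faithfully *)

Section Representation.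
Variables (R : pzRingType) (n : nat) (s si : 'I_n -> {rmorphism R -> R}).
Hypotheses (sK : forall i, cancel (s i) (si i)) (siK : forall i, cancel (si i) (s i)).
Hypothesis s_comm : forall i j r, s i (s j r) = s j (s i r).

Lemma si_s_comm i j r : si i (s j r) = s j (si i r).
Proof. by apply: (can_inj (sK i)); rewrite siK s_comm siK. Qed.

Lemma creg_s i c : creg c -> creg (s i c).
Proof. exact: creg_rmorph (sK i) (siK i). Qed.

Lemma creg_si i c : creg c -> creg (si i c).
Proof. exact: creg_rmorph (siK i) (sK i). Qed.

Fixpoint rm_iter (f : {rmorphism R -> R}) m : {rmorphism R -> R} :=
  if m is m'.+1 then (f \o rm_iter f m' : {rmorphism R -> R}) else idfun.

Lemma rm_iter_comm (f : {rmorphism R -> R}) (h : R -> R) m r :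
  (forall x, f (h x) = h (f x)) -> rm_iter f m (h r) = h (rm_iter f m r).
Proof. by move=> fh; elim: m => //= m ->. Qed.

Lemma creg_rm_iter (f : {rmorphism R -> R}) m c :
  (forall c, creg c -> creg (f c)) -> creg c -> creg (rm_iter f m c).
Proof. by move=> hf hc; elim: m => //= m; apply: hf. Qed.

Definition spow i (z : int) : {rmorphism R -> R} :=
  match z with Posz m => rm_iter (s i) m | Negz m => rm_iter (si i) m.+1 end.

Lemma spow_s i j z r : spow i z (s j r) = s j (spow i z r).
Proof.
by case: z => m; apply: rm_iter_comm => x; [apply: s_comm | apply: si_s_comm].
Qed.

Lemma spowS i z r : spow i (z + 1) r = s i (spow i z r).
Proof.
case: z => [m|[|m]]; first by have -> : Posz m + 1 = Posz m.+1 by lia.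
  by rewrite /= siK.
have -> : Negz m.+1 + 1 = Negz m by lia.
by rewrite /= siK.
Qed.

Lemma creg_spow i z c : creg c -> creg (spow i z c).
Proof. by case: z => m; apply: creg_rm_iter; [apply: creg_s | apply: creg_si]. Qed.

(* twist g is the product of the (sigma_i^{1/2})^{g_i}, so twist (h + h) is sigma^h. *)
Definition twist_on (l : seq 'I_n) (g : 'rV[int]_n) : {rmorphism R -> R} :=
  foldr (fun i (f : {rmorphism R -> R}) => (spow i (g 0 i) \o f : {rmorphism R -> R})) idfun l.

Definition twist := twist_on (enum 'I_n).

Lemma twist0 r : twist 0 r = r.
Proof. by rewrite /twist; elim: (enum 'I_n) => //= i l ->; rewrite mxE. Qed.

Lemma twist_comm_s g j r : twist g (s j r) = s j (twist g r).
Proof. by rewrite /twist; elim: (enum 'I_n) => //= i l ->; rewrite spow_s. Qed.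

Let twist_on_eq l (g g' : 'rV[int]_n) r :
  {in l, forall i, g 0 i = g' 0 i} -> twist_on l g r = twist_on l g' r.
Proof.
elim: l => //= i l IH gg'; rewrite gg' ?mem_head // IH // => a al.
by apply: gg'; rewrite in_cons al orbT.
Qed.

Let twist_onDe l (g : 'rV[int]_n) j r :
  uniq l -> j \in l -> twist_on l (g + unitvec j) r = s j (twist_on l g r).
Proof.
elim: l => //= i l IH /andP[il ul] jil.
have [<-{IH jil}|ij] := eqVneq i j.
  rewrite (@twist_on_eq _ _ g) => [|a al]; first by rewrite !mxE !eqxx spowS.
  have /negbTE ai : a != i by apply: contraNneq il => <-.
  by rewrite !mxE eqxx ai addr0.
have jl : j \in l by move: jil; rewrite in_cons eq_sym (negbTE ij).
by rewrite IH // !mxE eqxx (negbTE ij) addr0 spow_s.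
Qed.

Lemma twistDe g j r : twist (g + unitvec j) r = s j (twist g r).
Proof. by rewrite twist_onDe ?enum_uniq ?mem_enum. Qed.

Lemma twist_congr g g' r : g = g' -> twist g r = twist g' r.
Proof. by move->. Qed.

Lemma twist_s g j r : twist g (s j r) = twist (g + unitvec j) r.
Proof. by rewrite twist_comm_s twistDe. Qed.

Lemma twist_si g j r : twist g (si j r) = twist (g - unitvec j) r.
Proof. by apply: (can_inj (sK j)); rewrite -twist_comm_s siK -twistDe subrK. Qed.

Lemma creg_twist g c : creg c -> creg (twist g c).
Proof. by move=> hc; rewrite /twist; elim: (enum 'I_n) => //= i l IH; apply: creg_spow. Qed.

Variable t : 'I_n -> R.
Hypothesis t_creg : forall i, creg (t i).
Hypothesis cons1 : forall i j, i != j ->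
  s j (t i) * s i (t j) = si j (t i) * si i (t j).
Hypothesis cons2 : forall i j l, i != j -> j != l -> i != l ->
  s i (s j (t l)) * si i (si j (t l)) = s i (si j (t l)) * si i (s j (t l)).

Definition tau i (h : 'rV[int]_n) := twist (h + h) (s i (t i)).

Lemma creg_tau i h : creg (tau i h).
Proof. exact/creg_twist/creg_s. Qed.

Definition tau_cden i h : cden R := CDen (creg_tau i h).

Lemma tau_cons1 i j h : i != j ->
  tau i (h + unitvec j) * tau j (h + unitvec i) = tau i h * tau j h.
Proof.
move=> ij; have := congr1 (twist (h + h + unitvec i + unitvec j)) (cons1 _ _ ij).
rewrite !rmorphM /tau !(twist_s, twist_si) => e.
by apply: etrans (etrans _ e) _; congr (_ * _); apply: twist_congr; vec_eq.
Qed.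

Lemma tau_cons2 l i j h : i != j -> j != l -> i != l ->
  tau l (h + unitvec i + unitvec j) * tau l h = tau l (h + unitvec i) * tau l (h + unitvec j).
Proof.
move=> ij jl il.
have := congr1 (twist (h + h + unitvec i + unitvec j + unitvec l)) (cons2 _ _ _ ij jl il).
rewrite !rmorphM /tau !(twist_s, twist_si) => e.
by apply: etrans (etrans _ e) _; congr (_ * _); apply: twist_congr; vec_eq.
Qed.

Definition tau_ratio l d (h : 'rV[int]_n) : cfrac R := frac (tau l (h + unitvec d)) (tau_cden l h).

Lemma tau_ratio_eq l d h h' :
  tau_ratio l d h = tau_ratio l d h' <->
  tau l (h + unitvec d) * tau l h' = tau l (h' + unitvec d) * tau l h.
Proof. exact: frac_eq. Qed.

Section RatioInvariance.
Variables (l d : 'I_n).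
Hypothesis dl : d != l.

Lemma tau_ratioDe k h : k != l -> k != d -> tau_ratio l d (h + unitvec k) = tau_ratio l d h.
Proof.
move=> kl kd; apply/tau_ratio_eq; rewrite addrAC.
by apply: tau_cons2; rewrite // eq_sym.
Qed.

Lemma tau_ratio_shift k h (z : int) : k != l -> k != d ->
  tau_ratio l d (h + z *: unitvec k) = tau_ratio l d h.
Proof.
move=> kl kd; elim/int_rec: z => [|m IH|m IH]; first by rewrite scale0r addr0.
  have -> : h + m.+1%:Z *: unitvec k = h + m%:Z *: unitvec k + unitvec k by vec_eq.
  by rewrite tau_ratioDe.
rewrite -IH.
have -> : h + (- m%:Z) *: unitvec k = h + (- m.+1%:Z) *: unitvec k + unitvec k by vec_eq.
by rewrite tau_ratioDe.
Qed.

Lemma tau_ratio_agree (ks : seq 'I_n) (h h' : 'rV[int]_n) :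
  {in ks, forall k, k != l /\ k != d} -> {in [predC ks], forall a, h 0 a = h' 0 a} ->
  tau_ratio l d h = tau_ratio l d h'.
Proof.
elim: ks h => [|k ks IH] h hks hh'; first by congr tau_ratio; apply/rowP => a; apply: hh'.
have [kl kd] := hks k (mem_head _ _).
rewrite -(@tau_ratio_shift k h (h' 0 k - h 0 k)) //; apply: IH => [a aks|a].
  by apply: hks; rewrite in_cons aks orbT.
rewrite inE => aks; rewrite !mxE eqxx /=.
case: eqP => [->|/eqP ak]; first by rewrite mulr1 addrC subrK.
by rewrite mulr0 addr0 hh' // inE in_cons negb_or ak.
Qed.

End RatioInvariance.

Definition trunc (i : 'I_n) (h : 'rV[int]_n) : 'rV[int]_n :=
  \row_a (if (a <= i)%N then h 0 a else 0).

Lemma tau_ratio_trunc (l d : 'I_n) h : (d < l)%N -> tau_ratio l d (trunc l h) = tau_ratio l d h.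
Proof.
move=> dl; have dnl : d != l by rewrite neq_ltn dl.
apply: (@tau_ratio_agree l d dnl [seq k : 'I_n <- enum 'I_n | (l < k)%N]) => [k|a].
  by rewrite mem_filter => /andP[lk _]; rewrite !neq_ltn lk (ltn_trans dl lk) !orbT.
by rewrite inE mem_filter mem_enum andbT -leqNgt => al; rewrite mxE al.
Qed.

Lemma trunc_lt (i j : 'I_n) h : (i < j)%N -> trunc i (h + unitvec j) = trunc i h.
Proof.
move=> ij; apply/rowP => a; rewrite !mxE eqxx /=; case: ifP => // ai.
have /negbTE -> : a != j by apply: contraTneq ai => ->; rewrite -ltnNge.
by rewrite addr0.
Qed.

Lemma trunc_le (i j : 'I_n) h : (j <= i)%N -> trunc i (h + unitvec j) = trunc i h + unitvec j.
Proof.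
move=> ji; apply/rowP => a; rewrite !mxE eqxx /=; case: ifP => // ai.
have /negbTE -> : a != j by apply: contraFneq ai => ->.
by rewrite addr0.
Qed.

(* This is the relation X_i^+ X_j^- = X_j^- X_i^+ in the representation below. *)
Lemma tau_cocycle i j h : i != j ->
  tau i (trunc i (h + unitvec j)) * tau j (h + unitvec i) * tau j (trunc j h) =
  tau j h * tau i (trunc i h) * tau j (trunc j (h + unitvec i)).
Proof.
move=> ij; case: (ltngtP i j) => [lt|lt|/val_inj eij]; last by rewrite eij eqxx in ij.
  rewrite trunc_lt // trunc_le 1?ltnW //.
  have /tau_ratio_eq e := tau_ratio_trunc _ _ h lt.
  rewrite -mulrA -e (cregC (_ * _) (creg_tau i _)) (mulrAC_creg _ _ (creg_tau i _)).
  by rewrite (cregC (tau j h) (creg_tau j _)).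
rewrite trunc_le 1?ltnW // trunc_lt //.
have /tau_ratio_eq e := tau_ratio_trunc _ _ h lt.
congr (_ * _); apply: (creg_tau i h).2 => /=.
rewrite mulrA (cregC (tau i (_ + _)) (creg_tau i h)) e.
by rewrite (mulrAC_creg _ _ (creg_tau i _)) tau_cons1 // mulrA.
Qed.

Local Notation vfun := ('rV[int]_n -> cfrac R).

Definition wshift_fun (a : 'rV[int]_n -> R) (d : 'rV[int]_n -> cden R) (v : 'rV[int]_n)
  (f : vfun) : vfun := fun g => fscale (a g) (d g) (f (g + v)).

Lemma wshift_zmod a d v : zmod_morphism (wshift_fun a d v).
Proof. by move=> f f'; apply/funext => g; rewrite /wshift_fun /= fscale_zmod. Qed.

Definition wshift a d v : addEnd vfun := AddEnd (wshift_zmod a d v).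

Lemma wshiftM a d v b e w :
  wshift a d v * wshift b e w =
  wshift (fun g => a g * b (g + v)) (fun g => cdenM (d g) (e (g + v))) (v + w).
Proof. by apply: addEnd_ext => f; apply/funext => g; rewrite /= /wshift_fun fscaleA addrA. Qed.

Lemma wshift_eq a b (d e : 'rV[int]_n -> cden R) v :
  (forall g, a g * (e g : R) = b g * (d g : R)) -> wshift a d v = wshift b e v.
Proof.
by move=> abde; apply: addEnd_ext => f; apply/funext => g; apply: fscale_congr.
Qed.

Definition model_phi (r : R) := wshift (fun g => twist (g + g) r) (fun=> cden1) 0.
Definition model_Xp i := wshift (fun g => tau i (trunc i g)) (fun=> cden1) (unitvec i).
Definition model_Xm i := wshift (fun g => tau i (g - unitvec i))
  (fun g => tau_cden i (trunc i (g - unitvec i))) (- unitvec i).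

Lemma model_phi_zmod : zmod_morphism model_phi.
Proof.
move=> a b; apply: addEnd_ext => f; apply/funext => g.
by rewrite /= /wshift_fun rmorphB fscaleBl.
Qed.

Lemma model_phi_monoid : monoid_morphism model_phi.
Proof.
split=> [|a b]; first by apply: addEnd_ext => f; apply/funext => g;
  rewrite /= /wshift_fun rmorph1 fscale1 addr0.
rewrite /model_phi wshiftM addr0; apply: wshift_eq => g.
by rewrite /= !addr0 rmorphM !mulr1.
Qed.

HB.instance Definition _ := GRing.isZmodMorphism.Build R (addEnd vfun) model_phi model_phi_zmod.
HB.instance Definition _ := GRing.isMonoidMorphism.Build R (addEnd vfun) model_phi model_phi_monoid.

Lemma model_relations :
  tgwc_relations (fun i => s i) (fun i => si i) t model_phi model_Xp model_Xm.
Proof.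
split; [|split; [|split; [|split; [|split]]]].
- move=> i r; rewrite !wshiftM addr0 add0r; apply: wshift_eq => g /=.
  rewrite !mulr1 addr0 !twist_s (cregC _ (creg_tau i _)).
  by congr (_ * _); apply: twist_congr; vec_eq.
- move=> i r; rewrite !wshiftM addr0 add0r; apply: wshift_eq => g /=.
  rewrite !addr0 mul1r mulr1 !twist_si (cregC _ (creg_tau i _)).
  by congr (_ * _ * _); apply: twist_congr; vec_eq.
- move=> i; rewrite !wshiftM addrN; apply: wshift_eq => g /=.
  by rewrite addrK mulr1 mul1r -/(tau i g) (cregC _ (creg_tau i _)).
- move=> i; rewrite !wshiftM addNr; apply: wshift_eq => g /=.
  rewrite !mulr1; congr (_ * _).
  by rewrite /tau twist_s twist_si; apply: twist_congr; vec_eq.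
- move=> i j ij; rewrite !wshiftM addrC; apply: wshift_eq => g /=.
  have := tau_cocycle _ _ (g - unitvec j) ij.
  by rewrite mulr1 mul1r subrK addrAC.
move=> i j ij; rewrite !wshiftM addrC; apply: wshift_eq => g /=.
have ji : j != i by rewrite eq_sym.
have := tau_cocycle _ _ (g - unitvec i) ji.
by rewrite mulr1 mul1r subrK addrAC => ->.
Qed.

Lemma tgwc_iota_inj (A : pzRingType) (iota : {rmorphism R -> A}) (Xp Xm : 'I_n -> A) :
  tgwc_universal (fun i => s i) (fun i => si i) t iota Xp Xm -> injective iota.
Proof.
case=> _ /(_ _ model_phi _ _ model_relations) [psi [psi_iota _ _ _]].
apply: raddf_inj => r iota_r0.
have : model_phi r = 0 by rewrite -psi_iota iota_r0 rmorph0.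
move/(congr1 (fun F : addEnd vfun => F (fun=> frac 1 cden1) 0)).
rewrite /= /wshift_fun addr0 twist0 fscaleE => r0; apply/frac1_eq0/(etrans _ r0).
by apply: frac_congr; rewrite /= ?mulr1.
Qed.

End Representation.

(** * Monomials, degrees and torsion *)

Section Structure.
Variables (R : pzRingType) (n : nat) (s si : 'I_n -> {rmorphism R -> R}).
Hypotheses (sK : forall i, cancel (s i) (si i)) (siK : forall i, cancel (si i) (s i)).
Variable t : 'I_n -> R.
Hypothesis t_creg : forall i, creg (t i).
Variables (A : pzRingType) (iota : {rmorphism R -> A}) (Xp Xm : 'I_n -> A).
Hypothesis hA : tgwc_universal (fun i => s i) (fun i => si i) t iota Xp Xm.

Let rels := hA.1.
Lemma Xp_iota i r : Xp i * iota r = iota (s i (s i r)) * Xp i. Proof. exact: rels.1. Qed.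
Lemma Xm_iota i r : Xm i * iota r = iota (si i (si i r)) * Xm i. Proof. exact: rels.2.1. Qed.
Lemma Xp_Xm i : Xp i * Xm i = iota (s i (t i)). Proof. exact: rels.2.2.1. Qed.
Lemma Xm_Xp i : Xm i * Xp i = iota (si i (t i)). Proof. exact: rels.2.2.2.1. Qed.
Lemma Xp_Xm_comm i j : i != j -> Xp i * Xm j = Xm j * Xp i. Proof. exact: rels.2.2.2.2.1. Qed.
Lemma Xm_Xp_comm i j : i != j -> Xm i * Xp j = Xp j * Xm i. Proof. exact: rels.2.2.2.2.2. Qed.

Definition letter := (bool * 'I_n)%type.
Definition word := seq letter.

Definition gen (l : letter) : A := if l.1 then Xp l.2 else Xm l.2.
Definition monomial (w : word) : A := foldr (fun l a => gen l * a) 1 w.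

Lemma monomial_cat w1 w2 : monomial (w1 ++ w2) = monomial w1 * monomial w2.
Proof. by elim: w1 => [|l w IH] /=; rewrite ?mul1r // IH mulrA. Qed.

Definition lsigma (l : letter) (r : R) : R :=
  if l.1 then s l.2 (s l.2 r) else si l.2 (si l.2 r).
Definition wsigma (w : word) (r : R) : R := foldr lsigma r w.

Lemma gen_iota l r : gen l * iota r = iota (lsigma l r) * gen l.
Proof. by case: l => [[] i]; rewrite /gen /lsigma /= ?Xp_iota ?Xm_iota. Qed.

Lemma monomial_iota w r : monomial w * iota r = iota (wsigma w r) * monomial w.
Proof.
elim: w => [|l w IH] /=; first by rewrite mul1r mulr1.
by rewrite -mulrA IH mulrA gen_iota mulrA.
Qed.

Lemma creg_lsigma l c : creg c -> creg (lsigma l c).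
Proof.
case: l => [[] i] hc; rewrite /lsigma /=.
  exact/(creg_rmorph (sK i) (siK i))/(creg_rmorph (sK i) (siK i)).
exact/(creg_rmorph (siK i) (sK i))/(creg_rmorph (siK i) (sK i)).
Qed.

Lemma creg_wsigma w c : creg c -> creg (wsigma w c).
Proof. by move=> hc; elim: w => //= l w; apply: creg_lsigma. Qed.

Definition lflip (l : letter) : letter := (~~ l.1, l.2).
Definition winv (w : word) : word := rev (map lflip w).

Definition lcoef (l : letter) : R := if l.1 then si l.2 (t l.2) else s l.2 (t l.2).

Lemma gen_lflip l : gen (lflip l) * gen l = iota (lcoef l).
Proof. by case: l => [[] i]; rewrite /gen /lcoef /= ?Xm_Xp ?Xp_Xm. Qed.

Lemma creg_lcoef l : creg (lcoef l).
Proof.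
by case: l => [[] i]; [apply: creg_rmorph (siK i) (sK i) _ | apply: creg_rmorph (sK i) (siK i) _].
Qed.

Lemma monomial_winvl w : exists2 c, creg c & monomial (winv w) * monomial w = iota c.
Proof.
elim: w => [|l w [c hc IH]]; first by exists 1; rewrite ?rmorph1 ?mulr1 //; apply: creg1.
exists (wsigma (winv w) (lcoef l) * c); first exact/cregM/hc/creg_wsigma/creg_lcoef.
rewrite /winv map_cons rev_cons -cats1 monomial_cat -/(winv w) /= mulr1.
by rewrite mulrA -[monomial _ * gen _ * gen _]mulrA gen_lflip monomial_iota -mulrA IH rmorphM.
Qed.

Lemma monomial_winvr w : exists2 c, creg c & monomial w * monomial (winv w) = iota c.
Proof.
elim: w => [|l w [c hc IH]]; first by exists 1; rewrite ?rmorph1 ?mulr1 //; apply: creg1.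
exists (lsigma l c * lcoef (lflip l)).
  exact/cregM/creg_lcoef/creg_lsigma.
rewrite /winv map_cons rev_cons -cats1 monomial_cat -/(winv w) /= mulr1.
rewrite mulrA -[gen l * _ * _]mulrA IH gen_iota -mulrA.
by have := gen_lflip (lflip l); rewrite /lflip /= negbK -surjective_pairing => ->; rewrite rmorphM.
Qed.

Definition in_span (a : A) :=
  exists ps : seq (R * word), a = \sum_(p <- ps) iota p.1 * monomial p.2.

Lemma in_span1 : in_span 1.
Proof. by exists [:: (1, [::])]; rewrite big_seq1 rmorph1 mulr1. Qed.

Lemma in_spanB a b : in_span a -> in_span b -> in_span (a - b).
Proof.
move=> [ps ->] [qs ->]; exists (ps ++ [seq (- q.1, q.2) | q <- qs]).
by rewrite big_cat big_map -sumrN; congr (_ + _); apply: eq_bigr => q _; rewrite rmorphN mulNr.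
Qed.

Lemma in_spanM a b : in_span a -> in_span b -> in_span (a * b).
Proof.
move=> [ps ->] [qs ->].
exists [seq (p.1 * wsigma p.2 q.1, p.2 ++ q.2) | p <- ps, q <- qs].
rewrite big_allpairs_dep mulr_suml; apply: eq_bigr => p _; rewrite mulr_sumr.
apply: eq_bigr => q _; rewrite /= mulrA -[iota _ * monomial _ * iota _]mulrA.
by rewrite monomial_iota rmorphM monomial_cat !mulrA.
Qed.

Lemma in_span_iota r : in_span (iota r).
Proof. by exists [:: (r, [::])]; rewrite big_seq1 mulr1. Qed.

Lemma in_span_gen l : in_span (gen l).
Proof. by exists [:: (1, [:: l])]; rewrite big_seq1 rmorph1 mul1r /= mulr1. Qed.

Definition spanp : {pred A} := fun a => `[< in_span a >].

Lemma spanp_subring : subring_closed spanp.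
Proof.
split; rewrite /spanp ?inE; first exact/asboolP/in_span1.
  by move=> a b /asboolP ha /asboolP hb; apply/asboolP/in_spanB.
by move=> a b /asboolP ha /asboolP hb; apply/asboolP/in_spanM.
Qed.

Record spanT := SpanT { span_val :> A; span_valP : span_val \in spanp }.
HB.instance Definition _ := [isSub for span_val].
HB.instance Definition _ := [Choice of spanT by <:].
HB.instance Definition _ := GRing.SubChoice_isSubPzRing.Build A spanp spanT spanp_subring.

Definition span_iota (r : R) : spanT := @SpanT _ (introT (asboolP _) (in_span_iota r)).
Definition span_gen (l : letter) : spanT := @SpanT _ (introT (asboolP _) (in_span_gen l)).

Lemma span_iota_zmod : zmod_morphism span_iota.
Proof. by move=> a b; apply: val_inj; rewrite /= !rmorphB. Qed.
Lemma span_iota_monoid : monoid_morphism span_iota.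
Proof. by split=> [|a b]; apply: val_inj; rewrite /= ?rmorphM ?rmorph1. Qed.

HB.instance Definition _ := GRing.isZmodMorphism.Build R spanT span_iota span_iota_zmod.
HB.instance Definition _ := GRing.isMonoidMorphism.Build R spanT span_iota span_iota_monoid.

Lemma span_relations : tgwc_relations (fun i => s i) (fun i => si i) t span_iota
  (fun i => span_gen (true, i)) (fun i => span_gen (false, i)).
Proof.
split; [|split; [|split; [|split; [|split]]]] => [i r|i r|i|i|i j ij|i j ij];
  apply: val_inj; rewrite !rmorphM /=.
- exact: Xp_iota.
- exact: Xm_iota.
- exact: Xp_Xm.
- exact: Xm_Xp.
- exact: Xp_Xm_comm.
- exact: Xm_Xp_comm.
Qed.

(* The identity of A and A -> spanT -> A agree on generators, hence everywhere. *)
Lemma in_span_all a : in_span a.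
Proof.
have [_ univ] := hA.
have [psi [psi_iota psi_Xp psi_Xm _]] := univ _ _ _ _ span_relations.
have [psi0 [_ _ _ psi0_uniq]] := univ _ _ _ _ hA.1.
have idE := psi0_uniq idfun (fun=> erefl) (fun=> erefl) (fun=> erefl) a.
have valE : val (psi a) = a.
  rewrite [RHS]idE; apply: (psi0_uniq (val \o psi : {rmorphism A -> A})) => [r|i|i] /=;
  by rewrite ?psi_iota ?psi_Xp ?psi_Xm.
by rewrite -valE; apply/asboolP; apply: (valP (psi a)).
Qed.

Definition ldeg (l : letter) : 'rV[int]_n := if l.1 then unitvec l.2 else - unitvec l.2.
Definition deg (w : word) : 'rV[int]_n := \sum_(l <- w) ldeg l.

Lemma deg_cons l w : deg (l :: w) = ldeg l + deg w. Proof. exact: big_cons. Qed.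
Lemma deg_cat w1 w2 : deg (w1 ++ w2) = deg w1 + deg w2. Proof. exact: big_cat. Qed.

Definition plusw (w : word) := all (fun l : letter => l.1) w.
Definition minusw (w : word) := all (fun l : letter => ~~ l.1) w.

Lemma deg_plusw P i : plusw P -> deg P 0 i = (count_mem (true, i) P)%:Z.
Proof.
elim: P => [|[[] j] P IH] //=; first by rewrite /deg big_nil mxE.
move=> /IH; rewrite deg_cons mxE => ->; rewrite /ldeg !mxE /= xpair_eqE /= eq_sym.
by case: (j == i); rewrite ?add0n.
Qed.

Lemma deg_minusw N i : minusw N -> deg N 0 i = - (count_mem (false, i) N)%:Z.
Proof.
elim: N => [|[[] j] N IH] //=; first by rewrite /deg big_nil mxE oppr0.
move=> /IH; rewrite deg_cons mxE => ->; rewrite /ldeg !mxE /= xpair_eqE /= eq_sym.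
by case: (j == i) => /=; lia.
Qed.

Lemma Xm_plusw i {P} : plusw P -> exists r P' N', [/\ plusw P', minusw N',
  deg P' + deg N' = deg P - unitvec i & Xm i * monomial P = iota r * monomial P' * monomial N'].
Proof.
elim: P => [|[[] j] P IH] //= hP.
  exists 1, [::], [:: (false, i)]; split => //.
    by rewrite deg_cons /deg !big_nil /ldeg /= add0r addr0 sub0r.
  by rewrite rmorph1 /= !mul1r mulr1.
have [->|ji] := eqVneq j i.
  exists (si i (t i)), P, [::]; split => //; last by rewrite /= mulr1 mulrA Xm_Xp.
  by rewrite deg_cons /deg big_nil /ldeg /= addr0 addrC addKr.
have [r [P' [N' [hP' hN' hdeg hX]]]] := IH hP.
exists (s j (s j r)), ((true, j) :: P'), N'; split => //.
  by rewrite !deg_cons -addrA hdeg addrA.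
rewrite eq_sym in ji.
by rewrite /= /gen /= mulrA (Xm_Xp_comm _ _ ji) -mulrA hX !mulrA Xp_iota.
Qed.

Lemma monomial_normal w : exists r P N, [/\ plusw P, minusw N, deg P + deg N = deg w &
  monomial w = iota r * monomial P * monomial N].
Proof.
elim: w => [|[[] i] w [r [P [N [hP hN hdeg hw]]]]].
- by exists 1, [::], [::]; rewrite /deg !big_nil addr0 rmorph1 !mulr1.
- exists (s i (s i r)), ((true, i) :: P), N; split => //; first by rewrite !deg_cons -addrA hdeg.
  by rewrite /= hw !mulrA Xp_iota.
have [r' [P' [N' [hP' hN' hdeg' hX]]]] := Xm_plusw i hP.
exists (si i (si i r) * r'), P', (N' ++ N); split => //.
- by rewrite /minusw all_cat; apply/andP.
- by rewrite deg_cat addrA hdeg' deg_cons -hdeg /ldeg /= addrAC addrC.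
by rewrite /= hw monomial_cat !mulrA Xm_iota -[_ * Xm i * monomial P]mulrA hX rmorphM !mulrA.
Qed.

Lemma Xp_minusw {i N} : minusw N -> (false, i) \in N -> exists r N', [/\ minusw N',
  deg N' = deg N + unitvec i & Xp i * monomial N = iota r * monomial N'].
Proof.
elim: N => [|[b j] N IH] //; rewrite /minusw /= => /andP[nb hN].
case: b nb => // _; rewrite in_cons xpair_eqE /=.
have [<-|ij] := eqVneq i j => /= hin.
  exists (s i (t i)), N; split => //; last by rewrite /= /gen /= mulrA Xp_Xm.
  by rewrite deg_cons /ldeg /= addrAC addNr add0r.
have [r [N' [hN' hdeg hX]]] := IH hN hin.
exists (si j (si j r)), ((false, j) :: N'); split; first exact: hN'.
  by rewrite !deg_cons hdeg addrA.
by rewrite /= /gen /= mulrA (Xp_Xm_comm _ _ ij) -mulrA hX mulrA Xm_iota -mulrA.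
Qed.

Lemma minusw_deg0 {N} : minusw N -> deg N = 0 -> N = [::].
Proof.
case: N => [//|[b j] N] hN N0; have := deg_minusw _ j hN.
rewrite {}N0 mxE /=; move: hN; rewrite /minusw /= => /andP[].
by case: b => //= _ _; rewrite eqxx; lia.
Qed.

Lemma monomial_plusw_minusw {P N} : plusw P -> minusw N -> deg P + deg N = 0 ->
  exists r, monomial P * monomial N = iota r.
Proof.
elim/last_ind: P N => [|P [[] i] IH] N; rewrite /plusw ?all_rcons //=.
  move=> _ hN; rewrite /deg big_nil add0r => /(minusw_deg0 hN) ->.
  by exists 1; rewrite mulr1 rmorph1.
move=> hP hN hdeg; have hin : (false, i) \in N.
  have := congr1 (fun v : 'rV[int]_n => v 0 i) hdeg; rewrite !mxE deg_plusw ?deg_minusw //.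
    by rewrite -has_pred1 has_count -cats1 count_cat /= eqxx /=; lia.
  by rewrite /plusw all_rcons.
have [r [N' [hN' hdeg' hX]]] := Xp_minusw hN hin.
have [r' hr'] : exists r', monomial P * monomial N' = iota r'.
  apply: IH => //; rewrite hdeg' addrA -[deg P + _ + _]addrAC -hdeg -cats1 deg_cat.
  by rewrite deg_cons /deg big_nil addr0 -addrA.
exists (wsigma P r * r').
by rewrite -cats1 monomial_cat /= mulr1 -mulrA hX mulrA monomial_iota -mulrA hr' rmorphM.
Qed.

Lemma monomial_deg0 w : deg w = 0 -> exists r, monomial w = iota r.
Proof.
move=> w0; have [r [P [N [hP hN hdeg ->]]]] := monomial_normal w.
have [r' hr'] := monomial_plusw_minusw hP hN (etrans hdeg w0).
by exists (r * r'); rewrite -mulrA hr' rmorphM.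
Qed.

Variable D : 'rV[int]_n -> A -> Prop.
Hypothesis hD : is_grading D.
Hypothesis D_iota : forall r, D 0 (iota r).
Hypothesis D_Xp : forall i, D (unitvec i) (Xp i).
Hypothesis D_Xm : forall i, D (- unitvec i) (Xm i).

Lemma D_monomial w : D (deg w) (monomial w).
Proof.
elim: w => [|[[] i] w IH]; rewrite ?deg_cons /=.
- by rewrite /deg big_nil -(rmorph1 iota).
- exact: (gradingM hD (D_Xp i) IH).
- exact: (gradingM hD (D_Xm i) IH).
Qed.

Lemma deg0_iota a : D 0 a -> exists r, a = iota r.
Proof.
have [ps ->] := in_span_all a => D0.
rewrite (@grading_sum_deg0 _ _ _ hD _ _ (fun p : R * word => deg p.2)) // => [|p]; last first.
  by have := gradingM hD (D_iota p.1) (D_monomial p.2); rewrite add0r.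
apply: (big_ind (fun x => exists r, x = iota r)).
- by exists 0; rewrite rmorph0.
- by move=> _ _ [r ->] [r' ->]; exists (r + r'); rewrite rmorphD.
by move=> p /eqP /monomial_deg0 [r ->]; exists (p.1 * r); rewrite rmorphM.
Qed.

Lemma deg_surj v : exists w, deg w = v.
Proof.
have line j (z : int) : exists w, deg w = z *: unitvec j.
  elim/int_rec: z => [|m [w hw]|m [w hw]]; first by exists [::]; rewrite /deg big_nil scale0r.
    by exists ((true, j) :: w); rewrite deg_cons hw /ldeg /=; vec_eq.
  by exists ((false, j) :: w); rewrite deg_cons hw /ldeg /=; vec_eq.
have sum js : exists w, deg w = \sum_(j <- js) v 0 j *: unitvec j.
  elim: js => [|j js [w hw]]; first by exists [::]; rewrite /deg !big_nil.
  by have [w' hw'] := line j (v 0 j); exists (w' ++ w); rewrite deg_cat big_cons hw' hw.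
by have [w hw] := sum (index_enum 'I_n); exists w; rewrite hw [RHS]row_sum_delta.
Qed.

Hypothesis iota_inj : injective iota.

Lemma iota_eq0 r : iota r = 0 -> r = 0.
Proof. by move=> r0; apply: iota_inj; rewrite r0 rmorph0. Qed.

(* Central witnesses make ltors closed under sums. *)
Definition ltors a := exists2 c, creg c & iota c * a = 0.
Definition rtors a := exists2 c, creg c & a * iota c = 0.

Lemma ltors_homog {g b} : D g b ->
  (forall w y, deg w = - g -> monomial w * b = iota y -> y = 0) -> ltors b.
Proof.
move=> Db kill; have [w wg] := deg_surj (- g).
have [y wb] : exists y, monomial w * b = iota y.
  by apply: deg0_iota; have := gradingM hD (D_monomial w) Db; rewrite wg addNr.
have [c hc cE] := monomial_winvl w; exists c => //.
by rewrite -cE -mulrA wb (kill w y wg wb) rmorph0 mulr0.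
Qed.

Lemma rtors_homog {g b} : D g b ->
  (forall w y, deg w = - g -> b * monomial w = iota y -> y = 0) -> rtors b.
Proof.
move=> Db kill; have [w wg] := deg_surj (- g).
have [y bw] : exists y, b * monomial w = iota y.
  by apply: deg0_iota; have := gradingM hD Db (D_monomial w); rewrite wg addrN.
have [c hc cE] := monomial_winvr w; exists c => //.
by rewrite -cE mulrA bw (kill w y wg bw) rmorph0 mul0r.
Qed.

Lemma homog_rtors_ltors {g b} : D g b -> rtors b -> ltors b.
Proof.
move=> Db [c hc bc0]; apply: (ltors_homog Db) => w y _ wb.
apply: (creg_regular hc).2; rewrite /= mul0r; apply: iota_eq0.
by rewrite rmorphM -wb -mulrA bc0 mulr0.
Qed.

Lemma homog_ltors_rtors {g b} : D g b -> ltors b -> rtors b.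
Proof.
move=> Db [c hc cb0]; apply: (rtors_homog Db) => w y _ bw.
apply: hc.2; rewrite /= mulr0; apply: iota_eq0.
by rewrite rmorphM -bw mulrA cb0 mul0r.
Qed.

Lemma homog_lregular_ltors {g b r} : D g b -> regular r -> iota r * b = 0 -> ltors b.
Proof.
move=> Db [rl _] rb0; apply: (homog_rtors_ltors Db); apply: (rtors_homog Db) => w y _ bw.
apply: rl; rewrite /= mulr0; apply: iota_eq0.
by rewrite rmorphM -bw mulrA rb0 mul0r.
Qed.

Lemma homog_rregular_ltors {g b r} : D g b -> regular r -> b * iota r = 0 -> ltors b.
Proof.
move=> Db [_ rr] br0; apply: (ltors_homog Db) => w y _ wb.
apply: rr; rewrite /= mul0r; apply: iota_eq0.
by rewrite rmorphM -wb -mulrA br0 mulr0.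
Qed.

Lemma ltors0 : ltors 0.
Proof. by exists 1; rewrite ?mulr0 //; apply: creg1. Qed.

Lemma ltorsB a b : ltors a -> ltors b -> ltors (a - b).
Proof.
move=> [c hc ca0] [d hd db0]; exists (c * d); first exact: cregM.
by rewrite mulrBr {1}(cregC _ hc) !rmorphM -!mulrA ca0 db0 !mulr0 subrr.
Qed.

Lemma ltors_sum (I : Type) (r : seq I) (P : pred I) (F : I -> A) :
  (forall i, P i -> ltors (F i)) -> ltors (\sum_(i <- r | P i) F i).
Proof.
move=> hF; apply: big_ind => //; first exact: ltors0.
move=> a b ha hb; have -> : a + b = a - (0 - b) by rewrite sub0r opprK.
by apply: ltorsB => //; apply: ltorsB => //; apply: ltors0.
Qed.

Lemma rtors0 : rtors 0.
Proof. by exists 1; rewrite ?mul0r //; apply: creg1. Qed.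

Lemma rtorsD a b : rtors a -> rtors b -> rtors (a + b).
Proof.
move=> [c hc ac0] [d hd bd0]; exists (c * d); first exact: cregM.
by rewrite mulrDl {2}(cregC _ hc) !rmorphM !mulrA ac0 bd0 !mul0r addr0.
Qed.

Lemma rtors_sum (I : Type) (r : seq I) (P : pred I) (F : I -> A) :
  (forall i, P i -> rtors (F i)) -> rtors (\sum_(i <- r | P i) F i).
Proof. by move=> hF; apply: big_ind => //; [apply: rtors0 | apply: rtorsD]. Qed.

Lemma ltors_mull x a : ltors a -> ltors (x * a).
Proof.
move=> [c hc ca0]; have [ps ->] := in_span_all x; rewrite mulr_suml.
apply: ltors_sum => p _; exists (wsigma p.2 c); first exact: creg_wsigma.
rewrite !mulrA -rmorphM (cregC _ (creg_wsigma p.2 c hc)) rmorphM -(mulrA (iota p.1)).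
by rewrite -monomial_iota -!mulrA ca0 !mulr0.
Qed.

Lemma ltors_mulr x a : ltors a -> ltors (a * x).
Proof. by move=> [c hc ca0]; exists c; rewrite // mulrA ca0 mul0r. Qed.

Lemma lregular_ltors {a r} : regular r -> iota r * a = 0 -> ltors a.
Proof.
move=> hr ra0; have [gs [f [_ Df -> rf0]]] := grading_mull0 hD (D_iota r) ra0.
by apply: ltors_sum => g _; apply: homog_lregular_ltors (Df g) hr (rf0 g).
Qed.

Lemma rregular_ltors {a r} : regular r -> a * iota r = 0 -> ltors a.
Proof.
move=> hr ar0; have [gs [f [_ Df -> fr0]]] := grading_mulr0 hD (D_iota r) ar0.
by apply: ltors_sum => g _; apply: homog_rregular_ltors (Df g) hr (fr0 g).
Qed.

Lemma ltors_rtors {a} : ltors a -> rtors a.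
Proof.
move=> [c hc ca0]; have [gs [f [_ Df -> cf0]]] := grading_mull0 hD (D_iota c) ca0.
by apply: rtors_sum => g _; apply: homog_ltors_rtors (Df g) _; exists c.
Qed.

Lemma ltors_graded_ideal : is_graded_ideal D ltors.
Proof.
split; first split=> [|a b|x a ha]; [exact: ltors0 | exact: ltorsB | |].
  by split; [apply: ltors_mull | apply: ltors_mulr].
move=> a [c hc ca0]; have [gs [f [ugs Df aE cf0]]] := grading_mull0 hD (D_iota c) ca0.
by exists gs, f; split=> // g; split=> //; exists c.
Qed.

Lemma ltors_iota r : ltors (iota r) -> iota r = 0.
Proof.
move=> [c [_ hc] cr0]; rewrite -rmorphM in cr0.
by move/iota_eq0: cr0; rewrite -(mulr0 c) => /hc ->; rewrite rmorph0.
Qed.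

Lemma graded_ideal_ltors {I : A -> Prop} {a} : is_graded_ideal D I ->
  (forall r, I (iota r) -> iota r = 0) -> I a -> ltors a.
Proof.
move=> [[_ _ hI] hgr] hR Ia; have [gs [f [_ hf ->]]] := hgr a Ia.
apply: ltors_sum => g _; have [Dg Ig] := hf g; apply: (ltors_homog Dg) => w y _ wb.
by apply/iota_eq0/hR; rewrite -wb; apply: (hI _ _ Ig).1.
Qed.

Lemma ltors_regular {a} : ltors a -> exists r, regular r /\ iota r * a = 0.
Proof. by move=> [c hc ca0]; exists c; split=> //; apply: creg_regular. Qed.

Theorem tgwc_torsion :
  (forall a, in_sum_of_graded_ideals_meeting_R_trivially D iota a <->
             exists r, regular r /\ iota r * a = 0) /\
  (forall a, (exists r, regular r /\ iota r * a = 0) <->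
             (exists r, regular r /\ a * iota r = 0)).
Proof.
split=> a; split.
- move=> [m [Is [xs [hIs hR hx ->]]]]; apply: ltors_regular.
  by apply: ltors_sum => j _; apply: graded_ideal_ltors (hIs j) (hR j) (hx j).
- move=> [r [hr ra0]]; exists 1%N, (fun=> ltors), (fun=> a); split=> //.
  + by move=> _; apply: ltors_graded_ideal.
  + by move=> _; apply: ltors_iota.
  + by move=> _; apply: lregular_ltors hr ra0.
  by rewrite big_ord1.
- move=> [r [hr ra0]]; have [c hc ac0] := ltors_rtors (lregular_ltors hr ra0).
  by exists c; split=> //; apply: creg_regular.
by move=> [r [hr ar0]]; apply/ltors_regular/(rregular_ltors hr ar0).
Qed.

End Structure.

Theorem mainTheorem5
  (k : fieldType) (R : algType k) (n : nat)
  (s si : 'I_n -> {lrmorphism R -> R}) (t : 'I_n -> R)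
  (* s i = sigma_i^{1/2} is a k-algebra automorphism with inverse si i = sigma_i^{-1/2} *)
  (hs1 : forall i, cancel (s i) (si i)) (hs2 : forall i, cancel (si i) (s i))
  (* the sigma_i^{1/2} pairwise commute *)
  (hcomm : forall i j r, s i (s j r) = s j (s i r))
  (* t_i central and regular *)
  (htc : forall i r, t i * r = r * t i)
  (htreg : forall i, regular (t i))
  (* consistency equations *)
  (hcons1 : forall i j, i != j ->
     s j (t i) * s i (t j) = si j (t i) * si i (t j))
  (hcons2 : forall i j l, i != j -> j != l -> i != l ->
     s i (s j (t l)) * si i (si j (t l)) = s i (si j (t l)) * si i (s j (t l)))
  (* the TGWC: a k-algebra A presented by R and X_i^+-, with its Z^n-grading D *)
  (A : algType k) (iota : {lrmorphism R -> A}) (Xp Xm : 'I_n -> A)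
  (hA : tgwc_universal (fun i => s i) (fun i => si i) t iota Xp Xm)
  (D : 'rV[int]_n -> A -> Prop) (hD : is_grading D)
  (hDR : forall r, D 0 (iota r))
  (hDXp : forall i, D (unitvec i) (Xp i))
  (hDXm : forall i, D (- unitvec i) (Xm i)) :
  (forall a : A, in_sum_of_graded_ideals_meeting_R_trivially D iota a <->
                 exists r : R, regular r /\ iota r * a = 0) /\
  (forall a : A, (exists r : R, regular r /\ iota r * a = 0) <->
                 (exists r : R, regular r /\ a * iota r = 0)).
Proof.
pose s' i : {rmorphism R -> R} := s i.
pose si' i : {rmorphism R -> R} := si i.
have t_creg i : creg (t i) by split; [apply: htc | case: (htreg i)].
have iota_inj : injective iota.
  exact: (@tgwc_iota_inj R n s' si' hs1 hs2 hcomm t t_creg hcons1 hcons2 A iota Xp Xm hA).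
exact: (@tgwc_torsion R n s' si' hs1 hs2 t t_creg A iota Xp Xm hA D hD hDR hDXp hDXm iota_inj).
Qed.
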